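(* Let $G$ be a finite abelian group of order $mn$, let $N \le G$ be a subgroup of order $n$, and let $D \subseteq G$ be a semiregular $(m,n,k,\lambda_1,\lambda_2)$-divisible difference set in $G$ relative to $N$. Let $\{\eta_j\}_{j=1}^m$ be an enumeration of the annihilator $N^\perp$, and let $\{\chi_i\}_{i=1}^n$ be a set of coset representatives of $\widehat{G}/N^\perp$. For each $1\le i\le n$ and $1 \le j \le m$ define the vector \[ e^i_j := \frac{1}{\sqrt{k}}\big((\chi_i\eta_j)(g)\big)_{g\in D}\in\mathbb{C}^k \] (coordinates indexed by the elements of $D$). Then for each $i$, $\{e^i_j\}_{j=1}^m$ is a set of $m$ flat orthonormal vectors in $\mathbb{C}^k$. Moreover, setting $\mathcal{W}_i=\operatorname{span}\{e^i_j\}_{j=1}^m$ for $1\le i\le n$, the collection $\{\mathcal{W}_i\}_{i=1}^n$ of $n$ subspaces of dimension $m$ is an equichordal tight fusion frame for $\mathbb{C}^k$ with fusion frame bound $nm/k$.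
   Context: $\widehat{G}$ denotes the group (under pointwise multiplication) of characters, i.e. homomorphisms $\chi:G\to\{z\in\mathbb{C}:|z|=1\}$; $\chi_0$ is the principal character (constantly $1$). For a subgroup $N\le G$, $N^\perp=\{\chi\in\widehat{G}:\chi(h)=1\text{ for all }h\in N\}$. A subset $D\subseteq G$ of size $k$ is an $(m,n,k,\lambda_1,\lambda_2)$-divisible difference set relative to $N$ (where $|G|=mn$, $|N|=n$) if the multiset $\{d-d': d,d'\in D, d\neq d'\}$ contains each element of $G\setminus N$ exactly $\lambda_2$ times and each element of $N\setminus\{0\}$ exactly $\lambda_1$ times; it is semiregular if moreover $k>\lambda_1$ and $k^2-\lambda_2 mn=0$. A vector is flat if all its coordinates have equal modulus. A collection of $m$-dimensional subspaces $\{\mathcal{W}_i\}_{i=1}^n$ of $\mathbb{F}^k$ with orthogonal projections $P_i$ is a tight fusion frame with bound $A$ if $\sum_{i=1}^n P_i=AI_k$. It is equichordal if, choosing for each $i$ a matrix $L_i$ whose columns are an orthonormal basis of $\mathcal{W}_i$, $\operatorname{trace}(L_i^*L_jL_j^*L_i)$ $(=\operatorname{trace}(P_iP_j))$ is the same for all $i\neq j$. *)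

From HB Require Import structures.
From mathcomp Require Import all_boot all_order all_algebra all_field.
Set Implicit Arguments. Unset Strict Implicit. Unset Printing Implicit Defensive.
Import Order.TTheory GRing.Theory Num.Theory.
Local Open Scope ring_scope.

(* A finite abelian group is modelled as a finite Z-module G (written additively),
   the whole type being the group. Complex numbers: algC. *)

Section Defs.
Variable G : finZmodType.

Definition is_subgroup (N : {set G}) : Prop :=
  0 \in N /\ (forall x y, x \in N -> y \in N -> x - y \in N).

Definition is_character (chi : G -> algC) : Prop :=
  (forall x y, chi (x + y) = chi x * chi y) /\ (forall x, `|chi x| = 1).

Definition in_annihilator (N : {set G}) (chi : G -> algC) : Prop :=
  is_character chi /\ (forall h, h \in N -> chi h = 1).

Definition diff_count (D : {set G}) (g : G) : nat :=
  #|[set p : G * G | [&& p.1 \in D, p.2 \in D, p.1 != p.2 & p.1 - p.2 == g]]|.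

Definition divisible_diff_set (m n k l1 l2 : nat) (N D : {set G}) : Prop :=
  #|G| = (m * n)%N /\ #|N| = n /\ #|D| = k /\
  (forall g, g \notin N -> diff_count D g = l2) /\
  (forall g, g \in N -> g != 0 -> diff_count D g = l1).

Definition semiregular_dds (m n k l1 l2 : nat) (N D : {set G}) : Prop :=
  divisible_diff_set m n k l1 l2 N D /\ (l1 < k)%N /\ (k ^ 2 = l2 * (m * n))%N.

End Defs.

(* vectors in C^k are row vectors; standard inner product (conj-linear in 2nd arg) *)
Definition dotc (k : nat) (u v : 'rV[algC]_k) : algC := \sum_(a < k) u 0 a * (v 0 a)^*.

Definition flat (k : nat) (u : 'rV[algC]_k) : Prop := forall a b, `|u 0 a| = `|u 0 b|.

Definition adjmx (p q : nat) (A : 'M[algC]_(p, q)) : 'M[algC]_(q, p) := (map_mx Num.conj A)^T.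

(* P is the orthogonal projection onto the row space of W (acting on row vectors
   by v |-> v *m P): idempotent, self-adjoint, with image the span of W *)
Definition is_orthoproj (k r : nat) (W : 'M[algC]_(r, k)) (P : 'M[algC]_k) : Prop :=
  P *m P = P /\ adjmx P = P /\ (P == W)%MS.

(* e^i_j = k^{-1/2} ((chi_i eta_j)(g))_{g in D}, coordinates indexed by D via enum_val *)
Definition frame_vec (G : finZmodType) (D : {set G}) (chi eta : G -> algC)
  : 'rV[algC]_#|D| :=
  \row_(a < #|D|) ((chi (enum_val a) * eta (enum_val a)) / sqrtC (#|D|%:R)).

(* W_i, given by the matrix whose rows are e^i_1, ..., e^i_m *)
Definition span_mx (G : finZmodType) (D : {set G}) (m : nat) (chi : G -> algC)
  (eta : 'I_m -> G -> algC) : 'M[algC]_(m, #|D|) :=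
  \matrix_(j < m, a < #|D|) frame_vec D chi (eta j) 0 a.

From HB Require Import structures.
From mathcomp Require Import all_boot all_order all_algebra all_field.
From mathcomp Require Import ring.
From Stdlib Require Import FunctionalExtensionality.
Import Order.TTheory GRing.Theory Num.Theory.
Local Open Scope ring_scope.
Local Open Scope sesquilinear_scope.
Set Implicit Arguments.

(* For a character f of G put S(f) = \sum_(d in D) f d. Counting differences gives
   |S(f)|^2 = k + l1 (\sum_N f - 1) + l2 (\sum_G f - \sum_N f), so by orthogonality of
   characters and k^2 = l2 mn, S(f) = 0 when f is a nontrivial character trivial on N, and
   |S(f)|^2 = k - l1 when f is nontrivial on N. The Gram matrix of e^i_1, ..., e^i_m has entries
   S(eta_j conj eta_j') / k, so it is the identity; the matrix of inner products between the
   bases of W_i and W_i' (i <> i') has entries S(f) / k with f nontrivial on N, whence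
   tr(P_i P_i') = m^2 (k - l1) / k^2. Finally the mn = |G| products chi_i eta_j are pairwise
   distinct characters, so their square table also has orthogonal columns, which is exactly
   sum_i P_i = (mn / k) I. *)

Lemma mul_conj_eq1 (a b : algC) : `|b| = 1 -> a * b^* = 1 -> a = b.
Proof.
move=> nb1 ab1; have bb1 : b^* * b = 1 by rewrite mulrC -normCK nb1 expr1n.
by rewrite -[a]mulr1 -bb1 mulrA ab1 mul1r.
Qed.

Lemma div_sqrtC_mul_conj (x y : algC) (l : nat) :
  x / sqrtC l%:R * (y / sqrtC l%:R)^* = x * y^* / l%:R.
Proof.
have s_ge0 : 0 <= sqrtC (l%:R : algC) by rewrite sqrtC_ge0 ler0n.
by rewrite fmorph_div /= (geC0_conj s_ge0) mulrACA -invfM -expr2 sqrtCK.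
Qed.

Section Characters.
Variable G : finZmodType.
Implicit Types (f g : G -> algC) (x y h : G).

Lemma char_neq0 f x : is_character f -> f x != 0.
Proof. by case=> _ nf; rewrite -normr_eq0 nf oner_eq0. Qed.

Lemma char0 f : is_character f -> f 0 = 1.
Proof.
move=> cf; apply: (mulfI (char_neq0 0 cf)).
by case: cf => fD _; rewrite -fD addr0 mulr1.
Qed.

Lemma char_mul_conj f x : is_character f -> f x * (f x)^* = 1.
Proof. by case=> _ nf; rewrite -normCK nf expr1n. Qed.

Lemma char_conjE f x : is_character f -> (f x)^* = (f x)^-1.
Proof.
move=> cf; apply: (mulfI (char_neq0 x cf)).
by rewrite char_mul_conj // divff // char_neq0.
Qed.

Lemma char_sub f x y : is_character f -> f (x - y) = f x * (f y)^*.
Proof.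
move=> cf; rewrite char_conjE //; apply: (mulIf (char_neq0 y cf)).
by rewrite mulfVK ?char_neq0 //; case: cf => <- _; rewrite subrK.
Qed.

Lemma char1 : is_character (fun _ : G => 1).
Proof. by split=> [x y|x]; rewrite ?mulr1 ?normr1. Qed.

Lemma charM f g :
  is_character f -> is_character g -> is_character (fun x => f x * g x).
Proof.
case=> fD nf [gD ng]; split=> [x y|x]; first by rewrite fD gD mulrACA.
by rewrite normrM nf ng mulr1.
Qed.

Lemma char_conj f : is_character f -> is_character (fun x => (f x)^*).
Proof.
by case=> fD nf; split=> [x y|x]; rewrite ?fD ?rmorphM // norm_conjC nf.
Qed.

Lemma char_div f g :
  is_character f -> is_character g -> is_character (fun x => f x / g x).
Proof.
move=> cf cg; have := charM cf (char_conj cg).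
by congr is_character; apply: functional_extensionality => x; rewrite char_conjE.
Qed.

Lemma char_neq_mul_conj f g :
  is_character g -> f <> g -> exists x, f x * (g x)^* != 1.
Proof.
move=> [_ ng] fg; apply/existsP; apply: contra_notT fg => /existsPn fg1.
apply: functional_extensionality => x; apply: mul_conj_eq1 => //.
by apply/eqP; move/negPn: (fg1 x).
Qed.

(* The sum over a translation-invariant set is multiplied by f h, hence 0 if f h != 1. *)
Lemma char_sum_shift_eq0 (A : {pred G}) f h :
  is_character f -> f h != 1 -> (forall x, (h + x \in A) = (x \in A)) ->
  \sum_(x in A) f x = 0.
Proof.
move=> [fD _] fh1 hA.
have fhS : f h * \sum_(x in A) f x = \sum_(x in A) f x.
  rewrite mulr_sumr [RHS](reindex_inj (addrI h)) /=.
  by apply: eq_big => [x|x _]; rewrite ?hA ?fD.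
have : (f h - 1) * \sum_(x in A) f x = 0 by rewrite mulrBl fhS mul1r subrr.
by move/eqP; rewrite mulf_eq0 subr_eq0 (negbTE fh1) => /eqP.
Qed.

Lemma char_sum_eq0 f h : is_character f -> f h != 1 -> \sum_x f x = 0.
Proof. by move=> cf fh1; apply: (@char_sum_shift_eq0 predT _ h). Qed.

Lemma char_orthogonal f g : is_character f -> is_character g -> f <> g ->
  \sum_x f x * (g x)^* = 0.
Proof.
move=> cf cg /(char_neq_mul_conj cg) [x fgx].
exact: char_sum_eq0 (charM cf (char_conj cg)) fgx.
Qed.

Lemma subgroupD (N : {set G}) x y :
  is_subgroup N -> x \in N -> y \in N -> x + y \in N.
Proof.
case=> N0 NB xN yN; have := NB 0 y N0 yN; rewrite sub0r => Ny.
by have := NB x (- y) xN Ny; rewrite opprK.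
Qed.

Lemma subgroup_addl (N : {set G}) h x :
  is_subgroup N -> h \in N -> (h + x \in N) = (x \in N).
Proof.
move=> sN hN; apply/idP/idP => [hxN|]; last exact: subgroupD.
have [_ NB] := sN; by have := NB _ _ hxN hN; rewrite addrC addKr.
Qed.

Lemma char_sum_subgroup_eq0 (N : {set G}) f h :
  is_subgroup N -> is_character f -> h \in N -> f h != 1 ->
  \sum_(x in N) f x = 0.
Proof.
by move=> sN cf hN fh1; apply: char_sum_shift_eq0 cf fh1 _ => x; apply: subgroup_addl.
Qed.

End Characters.

Section DifferenceSums.
Variables (G : finZmodType) (D : {set G}).

Lemma diff_count0 : diff_count D 0 = 0%N.
Proof.
apply/eqP; rewrite cards_eq0; apply/eqP/setP => p; rewrite !inE subr_eq0.
by case: (p.1 == p.2); rewrite !andbF.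
Qed.

Lemma norm_sum_char_diff_count (f : G -> algC) : is_character f ->
  `|\sum_(d in D) f d| ^+ 2 = #|D|%:R + \sum_g (diff_count D g)%:R * f g.
Proof.
move=> cf; rewrite normCK rmorph_sum mulr_suml.
under eq_bigr => d dD do rewrite mulr_sumr (bigD1 d) //= char_mul_conj //.
rewrite big_split /= sumr_const pair_big_dep /= (partition_big (fun p => p.1 - p.2) predT) //=.
congr (_ + _); apply: eq_bigr => g _.
rewrite (eq_bigr (fun _ => f g)); last by move=> p /andP[_ /eqP <-]; rewrite char_sub.
rewrite mulr_natl -sumr_const; apply: eq_bigl => p; rewrite inE.
by do 2 case: (_ \in D) => //=; rewrite [p.2 == _]eq_sym.
Qed.

End DifferenceSums.

Section DivisibleDifferenceSet.
Context {G : finZmodType} {m n k l1 l2 : nat} {N D : {set G}}.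
Hypotheses (sN : is_subgroup N) (dds : divisible_diff_set m n k l1 l2 N D).

Lemma dds_sum_diff_count (f : G -> algC) :
  \sum_g (diff_count D g)%:R * f g =
  l1%:R * (\sum_(x in N) f x - f 0) + l2%:R * (\sum_x f x - \sum_(x in N) f x).
Proof.
have [_ [_ [_ [dc2 dc1]]]] := dds; have [N0 _] := sN.
have -> : \sum_(x in N) f x - f 0 = \sum_(x in N | x != 0) f x.
  by rewrite (bigD1 0) //= [f 0 + _]addrC addrK.
have -> : \sum_x f x - \sum_(x in N) f x = \sum_(x | x \notin N) f x.
  by rewrite (bigID (mem N)) /= [\sum_(x in N) f x + _]addrC addrK.
rewrite (bigID (mem N)) /= (bigD1 0) //= diff_count0 mul0r add0r !mulr_sumr.
congr (_ + _); apply: eq_bigr => g.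
  by case/andP=> gN g0; rewrite dc1.
by move=> gN; rewrite dc2.
Qed.

Lemma norm_dds_sum (f : G -> algC) : is_character f ->
  `|\sum_(d in D) f d| ^+ 2 =
  k%:R + l1%:R * (\sum_(x in N) f x - 1) + l2%:R * (\sum_x f x - \sum_(x in N) f x).
Proof.
have [_ [_ [cD _]]] := dds.
by move=> cf; rewrite norm_sum_char_diff_count // dds_sum_diff_count char0 // cD addrA.
Qed.

Lemma norm_dds_sum_nontrivial (f : G -> algC) h :
  is_character f -> h \in N -> f h != 1 ->
  `|\sum_(d in D) f d| ^+ 2 = k%:R - l1%:R.
Proof.
move=> cf hN fh1; rewrite norm_dds_sum // (char_sum_subgroup_eq0 sN cf hN fh1).
by rewrite (char_sum_eq0 _ cf fh1); ring.
Qed.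

(* Comparing with the trivial character, the semiregularity condition k^2 = l2 mn forces
   the sum to vanish. *)
Lemma dds_sum_annihilator_eq0 (f : G -> algC) g :
  (k ^ 2 = l2 * (m * n))%N -> in_annihilator N f -> f g != 1 ->
  \sum_(d in D) f d = 0.
Proof.
move=> k2 [cf fN] fg1; have [cG [cN [cD _]]] := dds.
have sumN1 (f' : G -> algC) : {in N, f' =1 (fun=> 1)} -> \sum_(x in N) f' x = n%:R.
  by move=> f'N; rewrite (eq_bigr _ f'N) sumr_const cN.
have sumG1 : \sum_(x : G) 1 = (m * n)%:R :> algC by rewrite -cG sumr_const.
have := norm_dds_sum (char1 G).
rewrite sumN1 // sumr_const cD normr_nat sumG1 -natrX k2 !natrM => k2E.
apply/eqP; rewrite -normr_eq0 -sqrf_eq0 norm_dds_sum // (char_sum_eq0 _ cf fg1).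
by rewrite sumN1 // sub0r -(subrr (l2%:R * (m%:R * n%:R))) {1}k2E; apply/eqP; ring.
Qed.

End DivisibleDifferenceSet.

Lemma adjmxE p q (A : 'M[algC]_(p, q)) : adjmx A = A ^t*.
Proof. exact: map_trmx. Qed.

Lemma orthoproj_unitary p q (M : 'M[algC]_(p, q)) :
  M \is unitarymx -> is_orthoproj M (M ^t* *m M).
Proof.
move=> Mu; have /unitarymxP MM := Mu.
rewrite /is_orthoproj adjmxE trmx_mul map_mxM trmxCK.
split; first by rewrite mulmxA mulmxtVK.
split=> //; apply/andP; split; first exact: submxMl.
by apply/submxP; exists M; rewrite mulmxA MM mul1mx.
Qed.

Lemma orthoproj_unitary_eq p q (M : 'M[algC]_(p, q)) P :
  M \is unitarymx -> is_orthoproj M P -> P = M ^t* *m M.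
Proof.
move=> Mu [PP [PadjP /andP[/submxP[A PA] /submxP[B MBP]]]].
have MP : M *m P = M by rewrite MBP -mulmxA PP.
have PE : P = M ^t* *m A ^t* by rewrite -PadjP PA adjmxE trmx_mul map_mxM.
have <- : M ^t* *m M *m P = P by rewrite {1}PE !mulmxA mulmxtVK // -PE.
by rewrite -mulmxA MP.
Qed.

Lemma mxtrace_adj_mul p q r (A : 'M[algC]_(p, q)) (B : 'M[algC]_(r, q)) :
  \tr (A ^t* *m A *m (B ^t* *m B)) = \sum_i \sum_j `|(A *m B ^t*) i j| ^+ 2.
Proof.
rewrite -mulmxA mxtrace_mulC !mulmxA -[X in \tr X]mulmxA.
have -> : B *m A ^t* = (A *m B ^t*) ^t* by rewrite trmx_mul map_mxM trmxCK.
rewrite /mxtrace; apply: eq_bigr => i _; rewrite mxE.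
by apply: eq_bigr => j _; rewrite !mxE normCK.
Qed.

(* F is a square matrix A with A A^* = c, hence also A^* A = c. *)
Lemma col_orthogonal (I T : finType) (F : I -> T -> algC) (c : algC) :
  #|T| = #|I| -> c != 0 ->
  (forall i i', \sum_t F i t * (F i' t)^* = c * (i == i')%:R) ->
  forall t t', \sum_i (F i t)^* * F i t' = c * (t == t')%:R.
Proof.
move=> TI c0 rowF t t'.
pose r (a : 'I_#|T|) : I := enum_val (cast_ord TI a).
have r_bij : bijective r.
  exists (fun i => cast_ord (esym TI) (enum_rank i)) => [a|i].
    by rewrite /r enum_valK cast_ordK.
  by rewrite /r cast_ordKV enum_rankK.
have sumT (H : T -> algC) : \sum_t H t = \sum_(b < #|T|) H (enum_val b).
  exact: (reindex _ (onW_bij _ (enum_val_bij T))).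
pose A : 'M[algC]_#|T| := \matrix_(a, b) F (r a) (enum_val b).
have AAt : A *m (c^-1 *: A ^t*) = 1%:M.
  apply/matrixP => a a'; rewrite -scalemxAr !mxE.
  under eq_bigr do rewrite !mxE.
  by rewrite -(sumT (fun x => F (r a) x * (F (r a') x)^*)) rowF (bij_eq r_bij) mulrA mulVf // mul1r.
have /matrixP/(_ (enum_rank t) (enum_rank t')) := mulmx1C AAt.
rewrite -scalemxAl !mxE (inj_eq enum_rank_inj) => AtA.
rewrite -AtA mulrA mulfV // mul1r (reindex r (onW_bij _ r_bij)).
by apply: eq_bigr => a _; rewrite !mxE !enum_rankK.
Qed.

Section FrameVectors.
Variables (G : finZmodType) (D : {set G}).
Implicit Types (c e : G -> algC).

Lemma dotc_frame_vec c e c' e' :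
  dotc (frame_vec D c e) (frame_vec D c' e') =
  (\sum_(d in D) c d * e d * (c' d * e' d)^*) / #|D|%:R.
Proof.
rewrite /dotc mulr_suml [RHS]big_enum_val /=; apply: eq_bigr => a _.
by rewrite !mxE div_sqrtC_mul_conj.
Qed.

Lemma flat_frame_vec c e : is_character c -> is_character e -> flat (frame_vec D c e).
Proof. by move=> [_ nc] [_ ne] a b; rewrite !mxE !normf_div !normrM !nc !ne. Qed.

Lemma span_mx_mul_adj m c c' (eta : 'I_m -> G -> algC) j j' :
  (span_mx D c eta *m (span_mx D c' eta) ^t*) j j' =
  dotc (frame_vec D c (eta j)) (frame_vec D c' (eta j')).
Proof. by rewrite !mxE; apply: eq_bigr => a _; rewrite !mxE. Qed.

Lemma span_mx_adj_mul m c (eta : 'I_m -> G -> algC) a b :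
  ((span_mx D c eta) ^t* *m span_mx D c eta) a b =
  (\sum_j (c (enum_val a) * eta j (enum_val a))^* * (c (enum_val b) * eta j (enum_val b)))
    / #|D|%:R.
Proof.
rewrite !mxE mulr_suml; apply: eq_bigr => j _.
by rewrite !mxE [LHS]mulrC div_sqrtC_mul_conj [_ * _^*]mulrC.
Qed.

End FrameVectors.

Section CosetRepresentatives.
Context {G : finZmodType} {m n : nat} {N : {set G}}.
Context {eta : 'I_m -> G -> algC} {chi : 'I_n -> G -> algC}.
Hypotheses (eta_ann : forall j, in_annihilator N (eta j)) (eta_inj : injective eta).
Hypothesis chi_char : forall i, is_character (chi i).
Hypothesis chi_reps : forall psi, is_character psi ->
  exists! i, in_annihilator N (fun g => psi g / chi i g).

Lemma chi_eta_char i j : is_character (fun x => chi i x * eta j x).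
Proof. by apply: charM => //; case: (eta_ann j). Qed.

Lemma chi_eq_on_subgroup i i' : {in N, chi i =1 chi i'} -> i = i'.
Proof.
move=> chiN; have [i0 [_ i0_uniq]] := chi_reps (chi_char i).
have ann i1 : {in N, chi i =1 chi i1} -> in_annihilator N (fun x => chi i x / chi i1 x).
  move=> e; split=> [|h hN]; first exact: char_div.
  by rewrite e // divff // char_neq0.
by rewrite -(i0_uniq i (ann i (fun _ _ => erefl))) -(i0_uniq i' (ann i' chiN)).
Qed.

Lemma chi_eta_inj i i' j j' :
  (forall x, chi i x * eta j x = chi i' x * eta j' x) -> i = i' /\ j = j'.
Proof.
move=> e; have ii' : i = i'.
  apply: chi_eq_on_subgroup => h hN; have := e h.
  by rewrite (proj2 (eta_ann j) h hN) (proj2 (eta_ann j') h hN) !mulr1.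
split=> //; subst i'; apply: eta_inj; apply: functional_extensionality => x.
exact: (mulfI (char_neq0 x (chi_char i)) (e x)).
Qed.

Lemma chi_eta_nontrivial i i' j j' : i != i' ->
  exists2 h, h \in N & chi i h * eta j h * (chi i' h * eta j' h)^* != 1.
Proof.
move=> ii'; apply/exists_inP; apply: contraNT ii' => /exists_inPn all1.
apply/eqP/chi_eq_on_subgroup => h hN; have := all1 h hN.
rewrite negbK (proj2 (eta_ann j) h hN) (proj2 (eta_ann j') h hN) !mulr1 => /eqP.
by apply: mul_conj_eq1; case: (chi_char i').
Qed.

Lemma chi_eta_row_orthogonal (r r' : 'I_n * 'I_m) :
  \sum_x chi r.1 x * eta r.2 x * (chi r'.1 x * eta r'.2 x)^* = #|G|%:R * (r == r')%:R.
Proof.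
case: eqP => [<-|rr'].
  rewrite mulr1 -sumr_const; apply: eq_bigr => x _.
  exact: (char_mul_conj x (chi_eta_char r.1 r.2)).
rewrite mulr0; apply: char_orthogonal (chi_eta_char _ _) (chi_eta_char _ _) _ => e.
apply: rr'; case: r r' e => [i j] [i' j'] /= e.
by have [-> ->] := chi_eta_inj _ _ _ _ (fun x => congr1 (@^~ x) e).
Qed.

(* The mn products chi_i eta_j are pairwise distinct characters and #|G| = mn, so they
   form a square character table. *)
Lemma chi_eta_col_orthogonal x y : #|G| = (m * n)%N ->
  \sum_i \sum_j (chi i x * eta j x)^* * (chi i y * eta j y) = #|G|%:R * (x == y)%:R.
Proof.
move=> cG; rewrite pair_big /=.
apply: (col_orthogonal (fun r x => chi r.1 x * eta r.2 x)).
- by rewrite card_prod !card_ord cG mulnC.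
- by rewrite pnatr_eq0 -lt0n; apply/card_gt0P; exists 0.
- exact: chi_eta_row_orthogonal.
Qed.

End CosetRepresentatives.

Section FusionFrame.
Context {G : finZmodType} {m n k l1 l2 : nat} {N D : {set G}}.
Context {eta : 'I_m -> G -> algC} {chi : 'I_n -> G -> algC}.
Hypotheses (sN : is_subgroup N) (sdds : semiregular_dds m n k l1 l2 N D).
Hypotheses (eta_ann : forall j, in_annihilator N (eta j)) (eta_inj : injective eta).
Hypothesis chi_char : forall i, is_character (chi i).
Hypothesis chi_reps : forall psi, is_character psi ->
  exists! i, in_annihilator N (fun g => psi g / chi i g).

Local Notation M i := (span_mx D (chi i) eta).

Lemma card_D : #|D| = k.
Proof. by have [[_ [_ [cD _]]] _] := sdds. Qed.

Lemma frame_vec_orthonormal i j j' :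
  dotc (frame_vec D (chi i) (eta j)) (frame_vec D (chi i) (eta j')) = (j == j')%:R.
Proof.
have [[cj Nj] [cj' Nj']] := (eta_ann j, eta_ann j').
rewrite dotc_frame_vec.
under eq_bigr => d _ do rewrite rmorphM mulrACA char_mul_conj // mul1r.
have D0 : (#|D|%:R : algC) != 0.
  by have [_ [l1k _]] := sdds; rewrite pnatr_eq0 card_D -lt0n (leq_ltn_trans _ l1k).
case: eqP => [<-|/eqP jj'].
  by rewrite (eq_bigr _ (fun d _ => char_mul_conj d cj)) sumr_const divff.
have /char_neq_mul_conj [//|x eta_x] : eta j <> eta j' by move/eta_inj; exact/eqP.
have [_ [_ k2]] := sdds.
rewrite (dds_sum_annihilator_eq0 sN sdds.1 _ k2 _ eta_x) ?mul0r //.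
split=> [|h hN]; first exact: charM cj (char_conj cj').
by rewrite Nj // Nj' // rmorph1 mulr1.
Qed.

Lemma span_mx_unitary i : M i \is unitarymx.
Proof.
by apply/unitarymxP/matrixP => j j'; rewrite span_mx_mul_adj frame_vec_orthonormal mxE.
Qed.

Lemma sum_span_mx_proj : \sum_i (M i) ^t* *m M i = ((n * m)%:R / k%:R)%:M.
Proof.
have [[cG _] _] := sdds.
apply/matrixP => a b; rewrite summxE.
under eq_bigr do rewrite span_mx_adj_mul.
rewrite -mulr_suml (chi_eta_col_orthogonal eta_ann eta_inj chi_char chi_reps) //.
rewrite (inj_eq enum_val_inj) !mxE cG -card_D.
by rewrite mulnC mulrAC mulr_natr.
Qed.

Lemma tr_span_mx_proj_mul i i' : i != i' ->
  \tr ((M i) ^t* *m M i *m ((M i') ^t* *m M i')) =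
  (m ^ 2)%:R * ((k%:R - l1%:R) / (k ^ 2)%:R).
Proof.
move=> ii'.
have entry a b : `|(M i *m (M i') ^t*) a b| ^+ 2 = (k%:R - l1%:R) / (k ^ 2)%:R.
  have [h hN chi_eta_h] := chi_eta_nontrivial eta_ann chi_char chi_reps _ _ a b ii'.
  have cf := charM (chi_eta_char eta_ann chi_char i a)
    (char_conj (chi_eta_char eta_ann chi_char i' b)).
  rewrite span_mx_mul_adj dotc_frame_vec normf_div expr_div_n normr_nat card_D natrX.
  by rewrite (norm_dds_sum_nontrivial sN sdds.1 cf hN chi_eta_h).
rewrite mxtrace_adj_mul (eq_bigr _ (fun a _ => eq_bigr _ (fun b _ => entry a b))).
by rewrite !sumr_const !card_ord -mulrnA mulr_natl mulnn.
Qed.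

End FusionFrame.

Theorem mainTheorem1 (G : finZmodType) (m n k l1 l2 : nat) (N D : {set G})
  (eta : 'I_m -> G -> algC) (chi : 'I_n -> G -> algC) :
  is_subgroup N ->
  semiregular_dds m n k l1 l2 N D ->
  (* {eta_j} is an enumeration of N^perp *)
  (forall j, in_annihilator N (eta j)) ->
  injective eta ->
  (forall psi, in_annihilator N psi -> exists j, eta j = psi) ->
  (* {chi_i} is a set of coset representatives of \hat G / N^perp *)
  (forall i, is_character (chi i)) ->
  (forall psi, is_character psi ->
     exists! i, in_annihilator N (fun g => psi g / chi i g)) ->
  (* each {e^i_j}_j is a family of m flat orthonormal vectors *)
  (forall i j, flat (frame_vec D (chi i) (eta j))) /\
  (forall i j j', dotc (frame_vec D (chi i) (eta j)) (frame_vec D (chi i) (eta j'))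
                  = (j == j')%:R) /\
  (* each W_i has dimension m *)
  (forall i, \rank (span_mx D (chi i) eta) = m) /\
  (* orthogonal projections onto the W_i exist *)
  (forall i, exists P, is_orthoproj (span_mx D (chi i) eta) P) /\
  (* {W_i} is an equichordal tight fusion frame with bound nm/k *)
  (forall P : 'I_n -> 'M[algC]_#|D|,
     (forall i, is_orthoproj (span_mx D (chi i) eta) (P i)) ->
     \sum_(i < n) P i = ((n * m)%:R / k%:R)%:M /\
     exists c : algC, forall i i', i != i' -> \tr (P i *m P i') = c).
Proof.
move=> sN sdds eta_ann eta_inj _ chi_char chi_reps.
have Mu i := span_mx_unitary sN sdds eta_ann eta_inj chi_char i.
split; first by move=> i j; apply: flat_frame_vec => //; case: (eta_ann j).
split; first exact: frame_vec_orthonormal sN sdds eta_ann eta_inj chi_char.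
split; first by move=> i; apply: mxrank_unitary.
split; first by move=> i; eexists; apply: orthoproj_unitary.
move=> P Pproj; have PE i := orthoproj_unitary_eq (Mu i) (Pproj i).
split; first by rewrite (eq_bigr _ (fun i _ => PE i)) (sum_span_mx_proj sdds).
by eexists => i i' ii'; rewrite !PE (tr_span_mx_proj_mul sN sdds).
Qed.
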